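(* Let $X$ be an $n\times n$ Boolean matrix with $X=X^*$, let $i\in\{1,\dots,n\}$, and let $\Delta X$ be an $n\times n$ Boolean matrix that is $i$-transitive and $i$-complete with respect to $X$. Then $$X+\Delta X=(X+I_{\Delta X,i}+J_{\Delta X,i})^2.$$
   Context: Boolean matrices have entries in $\{0,1\}$. $+$ is the entrywise OR and the product is the Boolean product. $X^*=\sum_{k\ge0}X^k$ with $X^0=I_n$ is the Kleene closure. For a Boolean matrix $M$, $I_{M,i}$ denotes the matrix equal to $M$ in row $i$ and zero elsewhere, and $J_{M,i}$ denotes the matrix equal to $M$ in column $i$ and zero elsewhere. $\Delta X$ is $i$-transitive with respect to $X$ if $I_{\Delta X,i}=I_{\Delta X,i}\cdot X$ and $J_{\Delta X,i}=X\cdot J_{\Delta X,i}$. $\Delta X$ is $i$-complete with respect to $X$ if $\Delta X=J_{\Delta X,i}\cdot I_{\Delta X,i}+X\cdot I_{\Delta X,i}+J_{\Delta X,i}\cdot X$. *)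

From mathcomp Require Import all_boot ssralg matrix.
Set Implicit Arguments. Unset Strict Implicit. Unset Printing Implicit Defensive.
Local Open Scope ring_scope.

Definition bmat (n : nat) := 'M[bool]_n.

Definition badd n (A B : bmat n) : bmat n := \matrix_(i, j) (A i j || B i j).
Definition bmul n (A B : bmat n) : bmat n :=
  \matrix_(i, j) [exists k, A i k && B k j].
Definition bid n : bmat n := \matrix_(i, j) (i == j).
Definition bzero n : bmat n := \matrix_(i, j) false.

Fixpoint bpow n (X : bmat n) (k : nat) : bmat n :=
  match k with 0 => bid n | k.+1 => bmul (bpow X k) X end.

(* Kleene closure X^* = sum_{k >= 0} X^k (infinite entrywise OR).
   (X^* ) i j holds iff some power X^k has a 1 at (i,j);
   X = X^* is stated entrywise. *)
Definition kleene_entry n (X : bmat n) (i j : 'I_n) : Prop :=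
  exists k, bpow X k i j.
Definition kleene_fixed n (X : bmat n) : Prop :=
  forall i j, X i j <-> kleene_entry X i j.

Definition Irow n (M : bmat n) (i : 'I_n) : bmat n :=
  \matrix_(r, c) ((r == i) && M r c).
Definition Jcol n (M : bmat n) (i : 'I_n) : bmat n :=
  \matrix_(r, c) ((c == i) && M r c).

Definition i_transitive n (D X : bmat n) (i : 'I_n) : Prop :=
  Irow D i = bmul (Irow D i) X /\ Jcol D i = bmul X (Jcol D i).

Definition i_complete n (D X : bmat n) (i : 'I_n) : Prop :=
  D = badd (badd (bmul (Jcol D i) (Irow D i)) (bmul X (Irow D i)))
           (bmul (Jcol D i) X).

From mathcomp Require Import all_boot ssralg matrix.

(* Write A := X + I + J with I := I_{D,i} and J := J_{D,i}.  Since X = X^*, the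
   relation X is reflexive and transitive, so X X = X.  Expanding A^2 into its
   nine products: X I, J X and J I lie in D by i-completeness, I X = I and
   X J = J lie in D by i-transitivity, I I <= I and J J <= J, and I J is
   supported on the single entry (i, i), which X contains.  Hence A^2 <= X + D.
   Conversely X = X 1 <= A A by reflexivity, and D = J I + X I + J X <= A A by
   monotonicity of the product. *)

Section BoolMatrixAlgebra.

Context {n : nat}.
Implicit Types (A B C M N : bmat n) (i r c : 'I_n).

Definition ble A B := forall r c, A r c -> B r c.

Lemma ble_refl A : ble A A.
Proof. by []. Qed.

Lemma ble_trans {A B C} : ble A B -> ble B C -> ble A C.
Proof. by move=> hAB hBC r c /hAB /hBC. Qed.

Lemma ble_anti A B : ble A B -> ble B A -> A = B.
Proof. by move=> hAB hBA; apply/matrixP => r c; apply/idP/idP => [/hAB|/hBA]. Qed.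

Lemma ble_addl A B : ble A (badd A B).
Proof. by move=> r c h; rewrite mxE h. Qed.

Lemma ble_addr A B : ble B (badd A B).
Proof. by move=> r c h; rewrite mxE h orbT. Qed.

Lemma badd_bleP A B C : ble (badd A B) C <-> ble A C /\ ble B C.
Proof.
split=> [h | [hA hB] r c]; first by split; apply: ble_trans _ h; [apply: ble_addl | apply: ble_addr].
by rewrite mxE => /orP [/hA | /hB].
Qed.

Lemma bmulP A B r c : reflect (exists k, A r k && B k c) (bmul A B r c).
Proof. by rewrite mxE; apply: existsP. Qed.

Lemma bmul_bleP A B C :
  ble (bmul A B) C <-> forall r k c, A r k -> B k c -> C r c.
Proof.
split=> [h r k c hA hB | h r c /bmulP [k /andP [hA hB]]]; last exact: h hA hB.
by apply: h; apply/bmulP; exists k; rewrite hA hB.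
Qed.

Lemma bmul_ble2 A B (A' B' : bmat n) :
  ble A A' -> ble B B' -> ble (bmul A B) (bmul A' B').
Proof.
move=> hA hB; apply/bmul_bleP => r k c /hA hA' /hB hB'.
by apply/bmulP; exists k; rewrite hA' hB'.
Qed.

Lemma bmulDl A B C : bmul (badd A B) C = badd (bmul A C) (bmul B C).
Proof.
apply: ble_anti.
  apply/bmul_bleP => r k c; rewrite mxE => /orP [hA | hB] hC.
    by apply: ble_addl; apply/bmulP; exists k; rewrite hA hC.
  by apply: ble_addr; apply/bmulP; exists k; rewrite hB hC.
by apply/badd_bleP; split; apply: bmul_ble2; [apply: ble_addl | | apply: ble_addr |].
Qed.

Lemma bmulDr A B C : bmul A (badd B C) = badd (bmul A B) (bmul A C).
Proof.
apply: ble_anti.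
  apply/bmul_bleP => r k c hA; rewrite mxE => /orP [hB | hC].
    by apply: ble_addl; apply/bmulP; exists k; rewrite hA hB.
  by apply: ble_addr; apply/bmulP; exists k; rewrite hA hC.
by apply/badd_bleP; split; apply: bmul_ble2; [| apply: ble_addl | | apply: ble_addr].
Qed.

Lemma bmul1l A : bmul (bid n) A = A.
Proof.
apply: ble_anti; first by apply/bmul_bleP => r k c; rewrite mxE => /eqP ->.
by move=> r c h; apply/bmulP; exists r; rewrite mxE eqxx h.
Qed.

Lemma bmul1r A : bmul A (bid n) = A.
Proof.
apply: ble_anti; first by apply/bmul_bleP => r k c h; rewrite mxE => /eqP <-.
by move=> r c h; apply/bmulP; exists c; rewrite mxE eqxx h.
Qed.

Lemma Irow_ble M i : ble (Irow M i) M.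
Proof. by move=> r c; rewrite mxE => /andP []. Qed.

Lemma Jcol_ble M i : ble (Jcol M i) M.
Proof. by move=> r c; rewrite mxE => /andP []. Qed.

Lemma bmul_Irow_Irow M N i : ble (bmul (Irow M i) (Irow N i)) (Irow N i).
Proof.
apply/bmul_bleP => r k c; rewrite !mxE => /andP [/eqP -> _] /andP [/eqP -> h].
by rewrite eqxx h.
Qed.

Lemma bmul_Jcol_Jcol M N i : ble (bmul (Jcol M i) (Jcol N i)) (Jcol M i).
Proof.
apply/bmul_bleP => r k c; rewrite !mxE => /andP [/eqP -> h] /andP [/eqP -> _].
by rewrite eqxx h.
Qed.

Lemma bmul_Irow_Jcol M N i : ble (bmul (Irow M i) (Jcol N i)) (bid n).
Proof.
apply/bmul_bleP => r k c; rewrite !mxE => /andP [/eqP -> _] /andP [/eqP -> _].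
exact: eqxx.
Qed.

Lemma bpow2 A : bpow A 2 = bmul A A.
Proof. by rewrite /= bmul1l. Qed.

Lemma kleene_fixed_refl A : kleene_fixed A -> ble (bid n) A.
Proof. by move=> hK r c h; apply/hK; exists 0%N. Qed.

Lemma kleene_fixed_trans A : kleene_fixed A -> ble (bmul A A) A.
Proof. by move=> hK r c h; apply/hK; exists 2%N; rewrite bpow2. Qed.

End BoolMatrixAlgebra.

Section CompleteExtension.

Context {n : nat} (X D : bmat n) (i : 'I_n).
Hypothesis X_refl : ble (bid n) X.
Hypothesis D_complete : i_complete D X i.

Local Notation I := (Irow D i).
Local Notation J := (Jcol D i).
Local Notation A := (badd (badd X I) J).

Lemma i_complete_ble : [/\ ble (bmul J I) D, ble (bmul X I) D & ble (bmul J X) D].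
Proof. by have := ble_refl D; rewrite {1}D_complete => /badd_bleP [/badd_bleP [? ?] ?]. Qed.

Lemma ble_extension_square : ble (badd X D) (bmul A A).
Proof.
have hXA : ble X A := ble_trans (ble_addl X I) (ble_addl _ J).
have hIA : ble I A := ble_trans (ble_addr X I) (ble_addl _ J).
have hJA : ble J A := ble_addr _ J.
apply/badd_bleP; split.
  by rewrite -{1}(bmul1r X); apply: bmul_ble2 (ble_trans X_refl hXA).
by rewrite {1}D_complete; repeat (apply/badd_bleP; split); apply: bmul_ble2.
Qed.

Hypothesis X_trans : ble (bmul X X) X.
Hypothesis D_transitive : i_transitive D X i.

Lemma square_ble_extension : ble (bmul A A) (badd X D).
Proof.
have [hJI hXI hJX] := i_complete_ble; have [hIX hXJ] := D_transitive.
have toX B : ble B X -> ble B (badd X D) by move/ble_trans; apply; apply: ble_addl.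
have toD B : ble B D -> ble B (badd X D) by move/ble_trans; apply; apply: ble_addr.
have hID := Irow_ble D i; have hJD := Jcol_ble D i.
rewrite !bmulDl !bmulDr; repeat (apply/badd_bleP; split).
- exact: toX.
- exact: toD.
- by rewrite -hXJ; apply: toD.
- by rewrite -hIX; apply: toD.
- exact/toD/(ble_trans (bmul_Irow_Irow D D i)).
- exact/toX/(ble_trans (bmul_Irow_Jcol D D i)).
- exact: toD.
- exact: toD.
- exact/toD/(ble_trans (bmul_Jcol_Jcol D D i)).
Qed.

End CompleteExtension.

Theorem mainTheorem12 (n : nat) (X D : bmat n) (i : 'I_n) :
  kleene_fixed X ->
  i_transitive D X i ->
  i_complete D X i ->
  badd X D = bmul (badd (badd X (Irow D i)) (Jcol D i))
                  (badd (badd X (Irow D i)) (Jcol D i)).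
Proof.
move=> /[dup] /kleene_fixed_refl X_refl /kleene_fixed_trans X_trans D_trans D_compl.
apply: ble_anti; first exact: ble_extension_square.
exact: square_ble_extension.
Qed.
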